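(* Let $m,n,a,d\in\mathbb{N}$. Let $X_1,\dots,X_m$ be i.i.d. random variables uniformly distributed on $\{1,2,\dots,a\}$ and $Y_1,\dots,Y_n$ i.i.d. random variables uniformly distributed on $\{1,2,\dots,d\}$, independent of the $X_i$. Let $X^{(1)}$ denote the largest of $X_1,\dots,X_m$ and $Y^{(1)}$ the largest of $Y_1,\dots,Y_n$. Then \[ \Pr\left(X^{(1)}>Y^{(1)}\right)=\sum_{y=1}^{\min\{a,d\}}\frac{(a^m-y^m)(y^n-(y-1)^n)}{a^{m}d^{n}}. \]
   Context: The $X_i$ are the faces shown by $m$ attacker dice with $a$ sides and the $Y_j$ the faces of $n$ defender dice with $d$ sides. In the paper's notation, the event $X^{(1)}>Y^{(1)}$ is written $\{X_i\}_m>_{1,1}\{Y_j\}_n$ (exactly one of the one comparison $X^{(1)}>Y^{(1)}$ holds; ties go to the defender). *)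

From HB Require Import structures.
From mathcomp Require Import all_boot all_order all_algebra.
Set Implicit Arguments. Unset Strict Implicit. Unset Printing Implicit Defensive.
Import Order.TTheory GRing.Theory Num.Theory.

(* Outcome of rolling m dice with a sides: a function 'I_m -> 'I_a; the
   face shown by die i is (x i).+1 \in {1,...,a}. *)
Definition attacker_roll (m a : nat) := {ffun 'I_m -> 'I_a}.
Definition defender_roll (n d : nat) := {ffun 'I_n -> 'I_d}.

Definition dice_space (m n a d : nat) :=
  (attacker_roll m a * defender_roll n d)%type.

Definition top_face (k s : nat) (x : {ffun 'I_k -> 'I_s}) : nat :=
  \max_(i < k) (x i).+1.

(* Uniform probability measure on a finite sample space: under it the
   coordinates are independent and each uniformly distributed. *)
Definition uprob (R : numFieldType) (T : finType) (E : {pred T}) : R :=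
  (#|E|%:R / #|T|%:R)%R.

From mathcomp Require Import all_boot all_order all_algebra zify.
Import Order.TTheory GRing.Theory Num.Theory.

(* The attacker wins iff the defender's top face y is beaten, which for a
   fixed defender roll happens in a^m - min(y,a)^m attacker rolls; grouping
   defender rolls by their top face y, of which there are y^n - (y-1)^n when
   1 <= y <= d, gives the sum, whose terms vanish for y > min a d. *)

Lemma card_ord_lt (s y : nat) : #|[pred j : 'I_s | j < y]| = minn y s.
Proof.
rewrite cardE /enum_mem size_filter -(count_map val (fun j => j < y)).
rewrite -enumT val_enum_ord.
elim: s => [|s IHs]; first by rewrite minn0.
by rewrite -addn1 iotaD count_cat IHs /=; case: (ltnP s y); lia.
Qed.

Section TopFace.

Variables k s : nat.
Local Notation roll := {ffun 'I_k -> 'I_s}.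

Lemma top_face_le (x : roll) : top_face x <= s.
Proof. by apply/bigmax_leqP => i _; exact: ltn_ord. Qed.

Lemma card_top_face_le (y : nat) :
  #|[pred x : roll | top_face x <= y]| = minn y s ^ k.
Proof.
rewrite -card_ord_lt -[k in RHS]card_ord -card_ffun_on.
apply: eq_card => x; rewrite inE /= /top_face.
apply/bigmax_leqP/ffun_onP => Hx i; first by rewrite inE; exact: Hx.
by move=> _; have := Hx i; rewrite inE.
Qed.

Lemma card_top_face_gt (y : nat) :
  #|[pred x : roll | y < top_face x]| = s ^ k - minn y s ^ k.
Proof.
have := cardC [pred x : roll | top_face x <= y].
rewrite card_ffun !card_ord -card_top_face_le => <-; rewrite addKn.
by apply: eq_card => x; rewrite !inE /= ltnNge.
Qed.

Lemma card_top_face_eq (y : nat) : 0 < y ->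
  #|[pred x : roll | top_face x == y]| = minn y s ^ k - minn y.-1 s ^ k.
Proof.
case: y => // y _; rewrite -!card_top_face_le /=.
set le_y := [pred x : roll | top_face x <= y].
rewrite -(cardID le_y [pred x : roll | top_face x <= y.+1]).
have -> : #|[predI [pred x : roll | top_face x <= y.+1] & le_y]| = #|le_y|.
  by apply: eq_card => x; rewrite !inE /= andbC andb_idr // => /leqW.
by rewrite addKn; apply: eq_card => x; rewrite !inE /= -ltnNge eqn_leq andbC.
Qed.

End TopFace.

Lemma card_prod_pred (T1 T2 : finType) (P : T1 -> T2 -> bool) :
  #|[pred w : T1 * T2 | P w.1 w.2]| = \sum_(x2 : T2) #|[pred x1 | P x1 x2]|.
Proof.
rewrite -sum1_card big_mkcond.
rewrite -(pair_big xpredT xpredT (fun x1 x2 => if P x1 x2 then 1 else 0)) exchange_big /=.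
by apply: eq_bigr => x2 _; rewrite -sum1_card [RHS]big_mkcond.
Qed.

Lemma sum_by_value (T : finType) (f : T -> nat) (F : nat -> nat) (N : nat) :
  (forall x, f x < N) ->
  \sum_(x : T) F (f x) = \sum_(0 <= y < N) #|[pred x | f x == y]| * F y.
Proof.
move=> ltfN; rewrite big_mkord.
under [RHS]eq_bigr => y _ do rewrite -sum1_card big_distrl /= big_mkcond.
rewrite exchange_big /=; apply: eq_bigr => x _.
rewrite (bigD1 (Ordinal (ltfN x))) //= inE eqxx mul1n big1 ?addn0 // => y neq_yx.
rewrite inE; suff /negbTE -> : f x != y by [].
by apply: contra neq_yx => /eqP fx_y; apply/eqP/val_inj.
Qed.

Lemma card_attacker_wins (m n a d : nat) : 0 < n ->
  #|[pred w : dice_space m n a d | top_face w.2 < top_face w.1]| =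
  \sum_(1 <= y < (minn a d).+1) (a ^ m - y ^ m) * (y ^ n - y.-1 ^ n).
Proof.
move=> n_gt0.
rewrite (@card_prod_pred _ _ (fun (x1 : attacker_roll m a) (x2 : defender_roll n d) =>
  top_face x2 < top_face x1)).
under eq_bigr => w2 _ do rewrite card_top_face_gt.
rewrite (@sum_by_value _ (@top_face n d) (fun y => a ^ m - minn y a ^ m) d.+1); last first.
  by move=> w2; rewrite ltnS top_face_le.
have no_top0 : #|[pred x : defender_roll n d | top_face x == 0]| = 0.
  transitivity #|[pred x : defender_roll n d | top_face x <= 0]|.
    by apply: eq_card => x; rewrite !inE leqn0.
  by rewrite card_top_face_le min0n exp0n.
rewrite big_ltn // no_top0 add0n.
rewrite (@big_cat_nat _ _ _ (minn a d).+1) //= ?ltnS ?geq_minr //.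
rewrite [X in _ + X]big1_seq ?addn0 => [|y]; last first.
  rewrite mem_index_iota => /andP[lt_ady lt_yd].
  have le_ay : a <= y by lia.
  by rewrite (minn_idPr le_ay) subnn muln0.
apply: eq_big_nat => y /andP[y_gt0]; rewrite ltnS leq_min => /andP[le_ya le_yd].
rewrite card_top_face_eq // !(minn_idPl _) ?(leq_trans (leq_pred y)) //.
exact: mulnC.
Qed.

Theorem proposition6p1 (R : realFieldType) (m n a d : nat)
  (hm : (0 < m)%N) (hn : (0 < n)%N) (ha : (0 < a)%N) (hd : (0 < d)%N) :
  uprob R [pred w : dice_space m n a d | top_face w.2 < top_face w.1] =
  (\sum_(1 <= y < (minn a d).+1)
     ((a%:R ^+ m - y%:R ^+ m) * (y%:R ^+ n - (y.-1)%:R ^+ n))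
       / (a%:R ^+ m * d%:R ^+ n))%R.
Proof.
rewrite /uprob card_attacker_wins // card_prod !card_ffun !card_ord.
rewrite -mulr_suml natrM !natrX natr_sum; congr (_ / _)%R.
apply: eq_big_nat => y /andP[_]; rewrite ltnS leq_min => /andP[le_ya _].
by rewrite natrM !natrB ?natrX ?leq_exp2r ?leq_pred.
Qed.
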